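(* Let $H=([n],E)$ be a hypergraph, let $S\subseteq E$, and let $b$ be the number of connected components of the hypergraph $([n],S)$ (isolated vertices counting as components). Then $\bigcap_{F\in S}P_F$ is isomorphic to $C^b$, and for all $0\le i\le b$, \[f_i\Big(\bigcap_{F\in S}P_F\Big)=\sum_{j=0}^i(-1)^j\binom{i}{j}(i-j+2)^b.\]
   Context: A hypergraph $H=([n],E)$ has vertex set $[n]$ and edge set $E$, a collection of nonempty subsets of $[n]$ (no edges of size 1, no edge properly contained in another). For $d\ge1$, $C^d$ denotes the triangulation of $[0,1]^d$ by the braid arrangement; identifying cube vertices with subsets of $[d]$, its faces are the chains $A_1\subsetneq\cdots\subsetneq A_l$ of subsets of $[d]$. For $F\subseteq[n]$, $P_F$ is the subcomplex of $C^n$ of faces contained in $\{x\in[0,1]^n: x_v=x_w\ \forall v,w\in F\}$, i.e., chains of subsets each of which contains $F$ or is disjoint from $F$. $f_i$ denotes the number of $i$-dimensional faces. *)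

From HB Require Import structures.
From mathcomp Require Import all_boot all_order all_algebra.
Set Implicit Arguments. Unset Strict Implicit. Unset Printing Implicit Defensive.

(* A (finite abstract) simplicial complex on vertex type T is given by its set of
   faces; each face is a finite nonempty set of vertices. *)

Definition vertices (T : finType) (K : {set {set T}}) : {set T} := cover K.

Definition sc_isomorphic (T1 T2 : finType) (K1 : {set {set T1}}) (K2 : {set {set T2}}) :
  Prop :=
  exists f : T1 -> T2,
    [/\ {in vertices K1 &, injective f},
        f @: vertices K1 = vertices K2 &
        forall s : {set T1}, s \subset vertices K1 -> (s \in K1) = (f @: s \in K2)].

(* number of i-dimensional faces (faces with i+1 vertices) *)
Definition fvec (T : finType) (K : {set {set T}}) (i : nat) : nat :=
  #|[set s in K | #|s| == i.+1]|.

Definition is_chain (d : nat) (c : {set {set 'I_d}}) : bool :=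
  [forall A in c, forall B in c, (A \subset B) || (B \subset A)].

(* C^d: the braid triangulation of [0,1]^d; vertices = subsets of [d],
   faces = nonempty chains A_1 < ... < A_l. *)
Definition cube (d : nat) : {set {set {set 'I_d}}} :=
  [set c | (c != set0) && is_chain c].

Definition PF (n : nat) (F : {set 'I_n}) : {set {set {set 'I_n}}} :=
  [set c in cube n | [forall A in c, (F \subset A) || [disjoint F & A]]].

(* Intersection of the subcomplexes P_F (F in S) of C^n; for S empty it is C^n. *)
Definition PS (n : nat) (S : {set {set 'I_n}}) : {set {set {set 'I_n}}} :=
  cube n :&: \bigcap_(F in S) PF F.

Definition is_hypergraph (n : nat) (E : {set {set 'I_n}}) : Prop :=
  [/\ forall F, F \in E -> F != set0,
      forall F, F \in E -> #|F| != 1%N &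
      forall F G, F \in E -> G \in E -> ~~ (F \proper G)].

Definition hadj (n : nat) (S : {set {set 'I_n}}) : rel 'I_n :=
  fun v w => [exists F in S, (v \in F) && (w \in F)].

Definition ncomp (n : nat) (S : {set {set 'I_n}}) : nat :=
  n_comp (hadj S) [set: 'I_n].

(* By inclusion-exclusion, the number of maps aT -> D whose
      image contains a fixed set R of s points is
      \sum_j (-1)^j C(s,j) (#|D| - j)^#|aT|  ([card_covering_maps]).
   2. Chains as maps.  A chain A_0 < ... < A_(k-1) of subsets of [b] is the
      same as a map h : [b] -> {0..k} hitting every inner value 1..k-1, via
      A_t = {x | h x <= t}  ([card_chains]).  With k = i+1 and s = i this
      gives the stated formula for f_i(C^b).
   3. Invariance.  f-vectors are invariant under isomorphism ([fvec_iso]).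
   4. Components.  The vertices of P_S are the S-saturated subsets of [n]
      (unions of connected components of ([n],S)); recording which components
      a saturated set contains is an isomorphism P_S ~ C^b ([PS_iso]). *)

From HB Require Import structures.
From mathcomp Require Import all_boot all_order all_algebra.
From mathcomp Require Import zify.
Import GRing.Theory.
Set Implicit Arguments. Unset Strict Implicit.

(* Pascal's rule applied to the alternating sums of step 1: the sum for
   s+1 excluded points is the difference of the sums for s points over
   codomains of size d and d-1. *)
Lemma alt_binomial_sumS (s d b : nat) :
  (\sum_(j < s.+2) (-1) ^+ j * ('C(s.+1, j))%:Z * ((d - j) ^ b)%:Z =
   \sum_(j < s.+1) (-1) ^+ j * ('C(s, j))%:Z * ((d - j) ^ b)%:Z -
   \sum_(j < s.+1) (-1) ^+ j * ('C(s, j))%:Z * ((d.-1 - j) ^ b)%:Z)%R.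
Proof.
rewrite big_ord_recl /=.
under eq_bigr => j _ do rewrite /bump /= add1n binS PoszD mulrDr mulrDl.
rewrite big_split /= addrA; congr (_ + _)%R.
  rewrite [in RHS]big_ord_recl /= !bin0 !subn0; congr (_ + _)%R.
  rewrite big_ord_recr /= bin_small // mulr0 mul0r addr0.
  by apply: eq_bigr => j _; rewrite /bump /= add1n.
rewrite -sumrN; apply: eq_bigr => j _.
by rewrite exprS !mulN1r !mulNr subnS -subn1 subnAC subn1.
Qed.

Definition covering_maps (aT T : finType) (D R : {set T}) : {set {ffun aT -> T}} :=
  [set h : {ffun aT -> T} | (h \in ffun_on D) && (R \subset codom h)].

(* Inclusion-exclusion step: a map covering R either also hits r, or it
   avoids r and so takes values in D minus r. *)
Lemma card_covering_split (aT T : finType) (D R : {set T}) (r : T) :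
  r \notin R ->
  #|covering_maps aT D R| =
  #|covering_maps aT D (r |: R)| + #|covering_maps aT (D :\ r) R|.
Proof.
move=> rR.
rewrite -(cardID [set h : {ffun aT -> T} | r \in codom h] (covering_maps aT D R)).
congr (_ + _); apply: eq_card => h; rewrite !inE.
  rewrite -andbA; congr (_ && _); apply/andP/subsetP => [[/subsetP HR Hr] y|H].
    by rewrite !inE => /orP[/eqP->|/HR].
  split; last by apply: H; rewrite !inE eqxx.
  by apply/subsetP => y yR; apply: H; rewrite !inE yR orbT.
have [/codomP[x ->]|rh] /= := boolP (r \in codom h).
  by apply/esym/negbTE; apply/negP => /andP[/forallP/(_ x)]; rewrite !inE eqxx.
congr (_ && _); apply/forallP/forallP => Hh x.
  by rewrite !inE Hh andbT; apply: contraNneq rh => <-; exact: codom_f.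
by move: (Hh x); rewrite !inE => /andP[].
Qed.

Lemma card_covering_maps (aT T : finType) (s : nat) (D R : {set T}) :
  #|R| = s -> R \subset D ->
  Posz #|covering_maps aT D R| =
  (\sum_(j < s.+1) (-1) ^+ j * ('C(s, j))%:Z * ((#|D| - j) ^ #|aT|)%:Z)%R.
Proof.
elim: s D R => [|s IH] D R cR RD.
  rewrite big_ord1 expr0 bin0 subn0 !mul1r.
  move/eqP: cR; rewrite cards_eq0 => /eqP ->.
  rewrite -card_ffun_on; congr (Posz _); apply: eq_card => h.
  by rewrite inE andb_idr // => _; apply/subsetP => y; rewrite inE.
have [r rR] : exists r, r \in R by apply/card_gt0P; rewrite cR.
have rR' : r \notin R :\ r by rewrite !inE eqxx.
have cR' : #|R :\ r| = s by move: cR; rewrite (cardsD1 r R) rR add1n => -[].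
have split_count := card_covering_split aT D rR'; rewrite setD1K // in split_count.
have -> : Posz #|covering_maps aT D R| =
          (Posz #|covering_maps aT D (R :\ r)|
           - Posz #|covering_maps aT (D :\ r) (R :\ r)|)%R.
  by rewrite split_count PoszD addrK.
rewrite (IH _ _ cR' (subset_trans (subD1set _ _) RD)) (IH _ _ cR' (setSD _ RD)).
by rewrite (cardsD1 r D) (subsetP RD _ rR) alt_binomial_sumS.
Qed.

Lemma card_ord_lt (k v : nat) : v <= k -> #|[set t : 'I_k | t < v]| = v.
Proof.
move=> vk.
have -> : [set t : 'I_k | t < v] = widen_ord vk @: [set: 'I_v].
  apply/setP => t; rewrite inE; apply/idP/imsetP => [tv|[u _ ->]] /=.
    by exists (Ordinal tv); [rewrite inE | apply: val_inj].
  by case: u.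
rewrite card_imset ?cardsT ?card_ord //.
by move=> u w /(congr1 val) /= /val_inj.
Qed.

Lemma chainP (d : nat) (c : {set {set 'I_d}}) :
  reflect (forall A B, A \in c -> B \in c -> (A \subset B) || (B \subset A))
          (is_chain c).
Proof.
apply: (iffP forallP) => [H A B Ac Bc | H A].
  by move/(_ A): H => /implyP/(_ Ac)/forallP/(_ B)/implyP/(_ Bc).
by apply/implyP => Ac; apply/forallP => B; apply/implyP => Bc; exact: H.
Qed.

Lemma set1_cube (d : nat) (A : {set 'I_d}) : [set A] \in cube d.
Proof.
rewrite inE; apply/andP; split; first by apply/set0Pn; exists A; rewrite set11.
by apply/chainP => B C; rewrite !inE => /eqP-> /eqP->; rewrite subxx.
Qed.

Section ChainsAsMaps.
Variables b k : nat.
Implicit Types (h : {ffun 'I_b -> 'I_k.+1}) (c : {set {set 'I_b}}).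

Definition level_set h (t : 'I_k) : {set 'I_b} := [set x | h x <= t].

Definition chain_of h : {set {set 'I_b}} := level_set h @: [set: 'I_k].

(* The inner values 1..k-1, which must all be hit for the level sets
   to be distinct. *)
Definition inner_values : {set 'I_k.+1} := ~: [set ord0; ord_max].

Lemma mem_inner_values (y : 'I_k.+1) : (y \in inner_values) = (0 < y < k).
Proof.
rewrite !inE negb_or -!val_eqE /= -lt0n.
by congr (_ && _); rewrite ltn_neqAle -ltnS ltn_ord andbT.
Qed.

Lemma chain_of_is_chain h : is_chain (chain_of h).
Proof.
apply/chainP => _ _ /imsetP[t1 _ ->] /imsetP[t2 _ ->].
by case: (leqP t1 t2) => [le|/ltnW le]; apply/orP; [left|right];
  apply/subsetP => x; rewrite !inE => /leq_trans; apply.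
Qed.

Lemma level_set_inj h : inner_values \subset codom h -> injective (level_set h).
Proof.
move=> /subsetP cov.
suff lt_neq (t1 t2 : 'I_k) : t1 < t2 -> level_set h t1 != level_set h t2.
  move=> t1 t2 E; case: (ltngtP t1 t2) => [lt|lt|/val_inj //].
    by move: (lt_neq _ _ lt); rewrite E eqxx.
  by move: (lt_neq _ _ lt); rewrite E eqxx.
move=> lt.
have t2k : t2 < k.+1 by rewrite ltnS ltnW.
have : Ordinal t2k \in inner_values.
  by rewrite mem_inner_values /= ltn_ord andbT (leq_ltn_trans _ lt).
move/cov/codomP => [x Ex].
by apply/negP => /eqP/setP/(_ x); rewrite !inE -Ex /= leqnn leqNgt lt.
Qed.

Lemma level_set_inj_cover h : injective (level_set h) -> inner_values \subset codom h.
Proof.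
move=> inj; apply/subsetP => y; rewrite mem_inner_values => /andP[y0 yk].
apply/negPn/negP => ny.
have pk : y.-1 < k by rewrite (leq_ltn_trans _ yk) // leq_pred.
suff E : level_set h (Ordinal pk) = level_set h (Ordinal yk).
  by move/inj/(congr1 val): E => /=; lia.
apply/setP => x; rewrite !inE /=.
have : h x != y by apply: contra ny => /eqP <-; exact: codom_f.
rewrite -val_eqE /= => hy.
apply/idP/idP => [/leq_trans->//|H]; first exact: leq_pred.
by rewrite -ltnS prednK // ltn_neqAle hy.
Qed.

Lemma value_from_chain h : inner_values \subset codom h ->
  forall x, h x = #|[set A in chain_of h | x \notin A]| :> nat.
Proof.
move=> cov x.
have -> : [set A in chain_of h | x \notin A] =
          level_set h @: [set t | x \notin level_set h t].
  apply/setP => A; rewrite inE; apply/andP/imsetP => [[/imsetP[t _ ->] xA]|[t]].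
    by exists t => //; rewrite inE.
  by rewrite inE => xt ->; split => //; exact: imset_f.
rewrite card_imset; last exact: level_set_inj.
have hk : h x <= k by rewrite -ltnS ltn_ord.
by rewrite -{1}(card_ord_lt hk); apply: eq_card => t; rewrite !inE -ltnNge.
Qed.

Definition chain_rank c : {ffun 'I_b -> 'I_k.+1} :=
  [ffun x => inord #|[set B in c | x \notin B]|].

Lemma chain_rankE c x : #|c| = k ->
  chain_rank c x = #|[set B in c | x \notin B]| :> nat.
Proof.
move=> ck; rewrite ffunE inordK // ltnS -ck.
by apply: subset_leq_card; apply/subsetP => B; rewrite inE => /andP[].
Qed.

(* Each member A of c is the level set of its rank (number of members of c
   contained in A) minus one. *)
Lemma chain_sub_chain_of c : is_chain c -> #|c| = k -> c \subset chain_of (chain_rank c).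
Proof.
move=> /chainP ch ck; apply/subsetP => A Ac.
set below := [set B in c | B \subset A].
have below_gt0 : 0 < #|below| by apply/card_gt0P; exists A; rewrite inE Ac subxx.
have below_le : #|below| <= k.
  by rewrite -ck; apply: subset_leq_card; apply/subsetP => B; rewrite inE => /andP[].
have rk : #|below|.-1 < k by lia.
apply/imsetP; exists (Ordinal rk) => //; apply/setP => x.
rewrite inE /= chain_rankE // -ltnS prednK //.
have [xA|xA] := boolP (x \in A).
  suff /proper_card-> : [set B in c | x \notin B] \proper below by [].
  rewrite properE; apply/andP; split; last first.
    by apply/subsetPn; exists A; rewrite !inE ?Ac ?subxx ?xA.
  apply/subsetP => B; rewrite !inE => /andP[Bc xB]; rewrite Bc /=.
  by case/orP: (ch _ _ Ac Bc) => // /subsetP/(_ x xA) xB'; rewrite xB' in xB.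
suff /subset_leq_card le : below \subset [set B in c | x \notin B].
  by apply/esym/negbTE; rewrite -leqNgt.
apply/subsetP => B; rewrite !inE => /andP[Bc /subsetP BA]; rewrite Bc /=.
by apply: contraNN xA => /BA.
Qed.

Lemma chain_of_rank c : is_chain c -> #|c| = k ->
  exists2 h : {ffun 'I_b -> 'I_k.+1}, inner_values \subset codom h & c = chain_of h.
Proof.
move=> ch ck; set h := chain_rank c.
have eqc : c = chain_of h.
  apply/eqP; rewrite eqEcard chain_sub_chain_of //= ck.
  by rewrite -[X in _ <= X](card_ord k) -cardsT leq_imset_card.
exists h => //; apply: level_set_inj_cover.
have /imset_injP inj : #|level_set h @: [set: 'I_k]| == #|[set: 'I_k]|.
  by rewrite -/(chain_of h) -eqc ck cardsT card_ord.
by move=> t1 t2; apply: inj; rewrite inE.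
Qed.

End ChainsAsMaps.

Lemma card_chains (b k : nat) : 0 < k ->
  #|[set c in cube b | #|c| == k]| =
  #|covering_maps 'I_b [set: 'I_k.+1] (inner_values k)|.
Proof.
move=> k0.
have inj : {in covering_maps 'I_b [set: 'I_k.+1] (inner_values k) &,
             injective (@chain_of b k)}.
  move=> h1 h2; rewrite !inE => /andP[_ c1] /andP[_ c2] E.
  apply/ffunP => x; apply: ord_inj.
  by rewrite (value_from_chain c1) (value_from_chain c2) E.
rewrite -(card_in_imset inj); apply: eq_card => c.
rewrite inE; apply/andP/imsetP => [[cc /eqP ck]|[h hc ->]].
  move: cc; rewrite inE => /andP[_ ch].
  have [h hc ->] := chain_of_rank ch ck.
  exists h => //; rewrite inE hc andbT; apply/ffun_onP => x; exact: in_setT.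
move: hc; rewrite inE => /andP[_ hc]; split.
  rewrite inE chain_of_is_chain andbT; apply/set0Pn.
  by exists (level_set h (Ordinal k0)); exact: imset_f.
by rewrite card_imset ?cardsT ?card_ord //; exact: level_set_inj.
Qed.

Lemma fvec_cube (b i : nat) :
  Posz (fvec (cube b) i) =
  (\sum_(j < i.+1) (-1) ^+ j * Posz 'C(i, j) * Posz ((i - j + 2) ^ b))%R.
Proof.
have n_inner : #|inner_values i.+1| = i.
  rewrite cardsCs setCK cards2 card_ord.
  have -> : (ord0 : 'I_i.+2) != ord_max by rewrite -val_eqE.
  by rewrite /= !subSS subn0.
rewrite /fvec card_chains // (card_covering_maps _ n_inner (subsetT _)).
rewrite cardsT !card_ord; apply: eq_bigr => j _.
by have -> : i.+2 - j = i - j + 2 by have := ltn_ord j; lia.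
Qed.

Lemma face_sub_vertices (T : finType) (K : {set {set T}}) (s : {set T}) :
  s \in K -> s \subset vertices K.
Proof. by move=> sK; exact: (bigcup_sup s sK). Qed.

(* Isomorphic complexes have the same f-vector: s |-> f @: s is a
   dimension-preserving bijection between their faces. *)
Lemma fvec_iso (T1 T2 : finType) (K1 : {set {set T1}}) (K2 : {set {set T2}}) :
  sc_isomorphic K1 K2 -> forall i, fvec K1 i = fvec K2 i.
Proof.
case=> f [inj imV faces] i.
have injs (s : {set T1}) : s \in K1 -> {in s &, injective f}.
  by move=> /face_sub_vertices/subsetP sV x y xs ys; apply: inj; apply: sV.
have injS : {in [set s in K1 | #|s| == i.+1] &,
               injective (fun s : {set T1} => f @: s)}.
  suff img_sub s1 s2 : s1 \in K1 -> s2 \in K1 -> f @: s1 = f @: s2 -> s1 \subset s2.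
    move=> s1 s2; rewrite !inE => /andP[s1K _] /andP[s2K _] E.
    by apply/eqP; rewrite eqEsubset !img_sub.
  move=> s1K s2K E; apply/subsetP => x xs.
  have /imsetP[y ys fxy] : f x \in f @: s2 by rewrite -E imset_f.
  rewrite (inj x y _ _ fxy) //.
    exact: subsetP (face_sub_vertices s1K) x xs.
  exact: subsetP (face_sub_vertices s2K) y ys.
rewrite /fvec -(card_in_imset injS); apply: eq_card => t.
rewrite inE; apply/imsetP/andP => [[s]|[tK /eqP tc]].
  rewrite inE => /andP[sK /eqP sc] ->; split.
    by rewrite -faces // face_sub_vertices.
  by rewrite card_in_imset ?sc //; exact: injs.
pose s := vertices K1 :&: f @^-1: t.
have sV : s \subset vertices K1 by apply: subsetIl.
have fs : f @: s = t.
  apply/setP => y; apply/imsetP/idP => [[x] |yt]; first by rewrite !inE => /andP[_ ?] ->.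
  have : y \in f @: vertices K1 by rewrite imV (subsetP (face_sub_vertices tK)).
  by case/imsetP => x xV yE; exists x => //; rewrite !inE xV -yE.
have sK : s \in K1 by rewrite (faces _ sV) fs.
by exists s => //; rewrite inE sK /= -tc -fs card_in_imset //; exact: injs.
Qed.

Section Components.
Variables (n : nat) (S : {set {set 'I_n}}).

Lemma hadj_connect_sym : connect_sym (hadj S).
Proof.
by apply: sym_connect_sym => v w; apply: eq_existsb => F; rewrite [(v \in F) && _]andbC.
Qed.

Local Notation root := (fingraph.root (hadj S)).

(* A is S-saturated when every edge lies inside A or outside A, i.e. A is
   a union of connected components; these are exactly the vertices of P_S. *)
Definition saturated (A : {set 'I_n}) : bool :=
  [forall F in S, (F \subset A) || [disjoint F & A]].

Lemma saturated_root A : saturated A -> forall x, (x \in A) = (root x \in A).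
Proof.
move=> /forallP sA x; apply: closed_connect; last exact: connect_root.
move=> y z /existsP[F /and3P[FS yF zF]].
move/implyP: (sA F) => /(_ FS) /orP[/subsetP FA | dA]; first by rewrite !FA.
by rewrite (disjointFr dA yF) (disjointFr dA zF).
Qed.

Definition comp_root (k : 'I_(ncomp S)) : 'I_n :=
  @enum_val _ (predI (roots (hadj S)) (mem [set: 'I_n])) k.

Lemma root_comp_root k : root (comp_root k) = comp_root k.
Proof. by have := enum_valP k; rewrite inE => /andP[/eqP]. Qed.

Lemma comp_root_surj x : exists k, comp_root k = root x.
Proof.
have Ax : root x \in predI (roots (hadj S)) (mem [set: 'I_n]).
  by rewrite !inE (roots_root hadj_connect_sym).
by exists (enum_rank_in Ax (root x)); rewrite /comp_root enum_rankK_in.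
Qed.

Definition comp_code (A : {set 'I_n}) : {set 'I_(ncomp S)} :=
  [set k | comp_root k \in A].

Definition comp_union (K : {set 'I_(ncomp S)}) : {set 'I_n} :=
  [set x | [exists k in K, comp_root k == root x]].

Lemma comp_codeK A : saturated A -> comp_union (comp_code A) = A.
Proof.
move=> sA; apply/setP => x; rewrite inE (saturated_root sA).
apply/existsP/idP => [[k /andP[kA /eqP <-]]|xA]; first by rewrite inE in kA.
by have [k kE] := comp_root_surj x; exists k; rewrite inE kE xA eqxx.
Qed.

Lemma comp_unionK K : comp_code (comp_union K) = K.
Proof.
apply/setP => k; rewrite !inE; apply/existsP/idP => [[k' /andP[k'K /eqP E]]|kK].
  by move: E; rewrite root_comp_root => /enum_val_inj <-.
by exists k; rewrite kK root_comp_root eqxx.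
Qed.

Lemma saturated_comp_union K : saturated (comp_union K).
Proof.
apply/forallP => F; apply/implyP => FS.
have same_root v w : v \in F -> w \in F -> root v = root w.
  move=> vF wF; apply/(fingraph.rootP hadj_connect_sym); apply: connect1.
  by apply/existsP; exists F; rewrite FS vF wF.
have [/existsP[v /andP[vF vK]]|nE] := boolP [exists v in F, v \in comp_union K].
  apply/orP; left; apply/subsetP => w wF.
  by move: vK; rewrite !inE (same_root v w vF wF).
apply/orP; right; rewrite -setI_eq0; apply/eqP/setP => w; rewrite !inE.
apply/negbTE/negP => /andP[wF wK]; move/negP: nE; apply.
by apply/existsP; exists w; rewrite wF inE.
Qed.

Lemma comp_code_mono A B : saturated A -> saturated B ->
  (A \subset B) = (comp_code A \subset comp_code B).
Proof.
move=> sA sB; apply/idP/idP => /subsetP H; apply/subsetP.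
  by move=> k; rewrite !inE => /H.
move=> x; rewrite -(comp_codeK sA) -(comp_codeK sB) !inE => /existsP[k /andP[kA kE]].
by apply/existsP; exists k; rewrite kE H.
Qed.

Lemma mem_PS (s : {set {set 'I_n}}) :
  {in s, forall A, saturated A} -> (s \in PS S) = (s \in cube n).
Proof.
move=> ss; rewrite /PS inE; have [sC|//] /= := boolP (s \in cube n).
apply/bigcapP => F FS; rewrite inE sC /=.
apply/forallP => A; apply/implyP => As.
by move/forallP: (ss A As) => /(_ F) /implyP /(_ FS).
Qed.

Lemma vertices_PS (A : {set 'I_n}) : (A \in vertices (PS S)) = saturated A.
Proof.
apply/bigcupP/idP => [[s sP As]| sA].
  apply/forallP => F; apply/implyP => FS.
  move: sP; rewrite inE => /andP[_ /bigcapP /(_ F FS)].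
  by rewrite inE => /andP[_ /forallP /(_ A) /implyP /(_ As)].
exists [set A]; last by rewrite set11.
by rewrite mem_PS ?set1_cube // => B; rewrite inE => /eqP->.
Qed.

End Components.

Lemma vertices_cube (d : nat) (A : {set 'I_d}) : A \in vertices (cube d).
Proof. by apply/bigcupP; exists [set A]; rewrite ?set11 ?set1_cube. Qed.

Lemma PS_iso (n : nat) (S : {set {set 'I_n}}) :
  sc_isomorphic (PS S) (cube (ncomp S)).
Proof.
exists (@comp_code n S); split.
- move=> A B; rewrite !vertices_PS => sA sB E.
  by rewrite -(comp_codeK sA) -(comp_codeK sB) E.
- apply/setP => K; rewrite vertices_cube; apply/imsetP; exists (comp_union K).
    by rewrite vertices_PS saturated_comp_union.
  by rewrite comp_unionK.
move=> s /subsetP sV.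
have ss : {in s, forall A, saturated S A} by move=> A /sV; rewrite vertices_PS.
rewrite mem_PS // !inE imset_eq0; congr (_ && _).
apply/chainP/chainP => H A B.
  case/imsetP => A' A's -> /imsetP[B' B's ->].
  by rewrite -!comp_code_mono ?ss //; apply: H.
move=> As Bs; rewrite (comp_code_mono (ss A As) (ss B Bs)).
by rewrite (comp_code_mono (ss B Bs) (ss A As)); apply: H; apply: imset_f.
Qed.

Theorem mainTheorem6 (n : nat) (E S : {set {set 'I_n}}) :
  is_hypergraph E -> S \subset E ->
  sc_isomorphic (PS S) (cube (ncomp S)) /\
  (forall i : nat, (i <= ncomp S)%N ->
     Posz (fvec (PS S) i) =
     (\sum_(j < i.+1) (-1) ^+ j * Posz 'C(i, j) * Posz ((i - j + 2) ^ ncomp S)%N)%R).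
Proof.
move=> _ _; split; first exact: PS_iso.
by move=> i _; rewrite (fvec_iso (PS_iso S)) fvec_cube.
Qed.
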